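(* Let $q\ge 4$ be even and $n\ge 3$ be odd. There does not exist an ordering $G(0),G(1),\ldots,G(q^n-1)$ of all of $\mathbb{Z}_q^n$ (indices taken modulo $q^n$) such that consecutive words $G(i),G(i+1)$ are at Lee distance $1$, and such that for every $i$ there is $\epsilon_i\in\{1,-1\}$ with $G(i)+(1,1,\ldots,1)=G(i+q^{n-1}+\epsilon_i)$.
   Context: The Lee distance between $v=(v_1,\ldots,v_n)$ and $u=(u_1,\ldots,u_n)$ in $\mathbb{Z}_q^n$ is $\sum_{i=1}^n \min\{|v_i-u_i|,\,q-|v_i-u_i|\}$, where $v_i,u_i$ are regarded as integers in $\{0,\ldots,q-1\}$. Addition of words is componentwise in $\mathbb{Z}_q$. *)

From mathcomp Require Import all_boot all_order all_algebra.
Set Implicit Arguments. Unset Strict Implicit. Unset Printing Implicit Defensive.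
Import GRing.Theory.

(* Words of Z_q^n are row vectors 'rV['Z_q]_n (q >= 2 assumed where used). *)

Definition lee_sym (q : nat) (a b : 'Z_q) : nat :=
  let d := if (val a <= val b)%N then (val b - val a)%N else (val a - val b)%N in
  minn d (q - d).

Definition lee_dist (q n : nat) (v u : 'rV['Z_q]_n) : nat :=
  (\sum_(i < n) @lee_sym q (v ord0 i) (u ord0 i))%N.

(* Let D i = G (i + 1) - G i, a unit step +-e_k, and let eps i be the sign in
   G i + 1 = G (i + M + eps i), where M = q^(n-1). Comparing the shift relations at i
   and i + 2, injectivity of G makes eps 2-periodic. If eps is constant, q applications
   of the shift bring G 0 back to itself at the index +-q, which is not 0 in Z_N.
   Otherwise eps alternates, and at an index i with eps i = 1 one gets D (i + M) = - D i,
   but also D (j + 2) = +-D j for the even offsets j of i, the sign flipping exactly when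
   D (j + 1) is off the axis k of D i. Since q is even, the parity of the sum of the
   coordinates off axis k counts these flips, so over M/2 double steps the total sign is
   that parity for G (i + M) - G i = D i + (1,...,1), namely the parity of n - 1, which
   is even. Hence D (i + M) = D i, and 2 D i = 0 is impossible in Z_q for q > 2. *)

From mathcomp Require Import all_boot all_order all_algebra.
From mathcomp Require Import zify ring.
Import GRing.Theory.
Local Open Scope ring_scope.
Set Implicit Arguments. Unset Strict Implicit. Unset Printing Implicit Defensive.

Definition pm1 (R : pzRingType) (x : R) := (x == 1) || (x == -1).

Lemma pm1N (R : pzRingType) (x : R) : pm1 x -> pm1 (- x).
Proof. by case/orP=> /eqP ->; rewrite /pm1 ?opprK eqxx ?orbT. Qed.

Lemma pm1_sign (R : pzRingType) (b : bool) (x : R) : pm1 x -> pm1 ((-1) ^+ b * x).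
Proof. by case: b; rewrite ?mul1r ?mulN1r //; apply: pm1N. Qed.

Lemma pm1_neq0 (R : nzRingType) (x : R) : pm1 x -> x != 0.
Proof. by case/orP=> /eqP ->; rewrite ?oppr_eq0 oner_eq0. Qed.

Lemma pm1_addr_neq0 (R : pzRingType) (x y : R) : pm1 x -> pm1 y -> x + y != 0 -> y = x.
Proof. by case/orP=> /eqP-> /orP[]/eqP-> //; rewrite ?subrr ?addNr eqxx. Qed.

Lemma pm1_neq (R : pzRingType) (x y : R) : pm1 x -> pm1 y -> x != y -> y = - x.
Proof. by case/orP=> /eqP-> /orP[]/eqP->; rewrite ?eqxx ?opprK. Qed.

Lemma Zp_nat_neq0 N k : (0 < k < N)%N -> (k%:R : 'Z_N) != 0.
Proof.
move=> /andP[k_gt0 k_lt]; apply/eqP => /(congr1 val).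
by have := val_Zp_nat (leq_ltn_trans k_gt0 k_lt) k => /= ->; rewrite modn_small //; lia.
Qed.

Lemma subr_telescope (V : zmodType) (x y z : V) : (y - x) + (z - y) = z - x.
Proof. by rewrite addrC subrKA. Qed.

Section ZpSymbols.
Variable r : nat.
Local Notation Zq := 'Z_(r.+2).

Lemma Zp_val_add1 (x : Zq) : val (x + 1) = if val x == r.+1 then 0%N else (val x).+1.
Proof.
have -> : val (x + 1) = ((val x + 1) %% r.+2)%N by rewrite /= [(1 %% _)%N]modn_small.
have : (val x < r.+2)%N := ltn_ord x.
by case: eqP => [->|? ?]; rewrite ?addn1 ?modnn // modn_small; lia.
Qed.

Lemma lee_sym_eq0 (a b : Zq) : lee_sym a b = 0%N -> a = b.
Proof.
have ha : (val a < r.+2)%N := ltn_ord a; have hb : (val b < r.+2)%N := ltn_ord b.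
by rewrite /lee_sym => h; apply: val_inj; move: h; case: leqP; lia.
Qed.

Lemma lee_sym_eq1 (a b : Zq) : lee_sym a b = 1%N -> pm1 (b - a).
Proof.
rewrite /lee_sym => h.
suff [->|->] : b = a + 1 \/ a = b + 1.
- by rewrite /pm1 addrC addKr eqxx.
- by rewrite /pm1 opprD addrA subrr add0r eqxx orbT.
have ha : (val a < r.+2)%N := ltn_ord a; have hb : (val b < r.+2)%N := ltn_ord b.
move: h; case: leqP => ab h.
- have [E|E] : val b = (val a).+1 \/ val a = 0%N /\ val b = r.+1 by lia.
    by left; apply: val_inj; rewrite Zp_val_add1 E; case: eqP => //; lia.
  by right; apply: val_inj; rewrite Zp_val_add1; case: E => -> ->; rewrite eqxx.
- have [E|E] : val a = (val b).+1 \/ val b = 0%N /\ val a = r.+1 by lia.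
    by right; apply: val_inj; rewrite Zp_val_add1 E; case: eqP => //; lia.
  by left; apply: val_inj; rewrite Zp_val_add1; case: E => -> ->; rewrite eqxx.
Qed.

End ZpSymbols.

Definition unit_step (R : pzRingType) n (w : 'rV[R]_n) :=
  exists k : 'I_n, exists2 s : R, pm1 s & w = s *: delta_mx 0 k.

Lemma scale_delta_rowE (R : pzRingType) n (s : R) (k j : 'I_n) :
  (s *: delta_mx 0 k : 'rV[R]_n) 0 j = s *+ (j == k).
Proof. by rewrite !mxE eqxx mulr_natr. Qed.

Lemma lee_dist_eq1 r n (v u : 'rV['Z_(r.+2)]_n) : lee_dist v u = 1%N -> unit_step (u - v).
Proof.
rewrite /lee_dist => h.
have [k nz_k] : exists k, lee_sym (v ord0 k) (u ord0 k) != 0%N.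
  apply/existsP; apply: contraT; rewrite negb_exists => /forallP all0.
  by move: h; rewrite big1 // => j _; apply/eqP; rewrite -[_ == _]negbK all0.
move: h; rewrite (bigD1 k) //= => h.
have lee_k : lee_sym (v ord0 k) (u ord0 k) = 1%N by lia.
move: h; rewrite lee_k add1n => -[] /eqP; rewrite sum_nat_eq0 => /forallP lee_j.
exists k, (u ord0 k - v ord0 k); first exact: lee_sym_eq1.
apply/matrixP => i j; rewrite ord1 scale_delta_rowE !mxE.
have [->|jk] := eqVneq j k; first by [].
by have := lee_j j; rewrite jk => /eqP/lee_sym_eq0 ->; rewrite subrr.
Qed.

Section UnitSteps.
Variables r n : nat.
Hypothesis r_gt0 : (0 < r)%N.
Local Notation Zq := 'Z_(r.+2).
Local Notation e k := (delta_mx 0 k : 'rV[Zq]_n).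

Lemma pm1_double_neq0 (x : Zq) : pm1 x -> x + x != 0.
Proof.
have two_neq0 : (1 + 1 : Zq) != 0 by apply: (@Zp_nat_neq0 _ 2); lia.
by case/orP=> /eqP->; rewrite // -opprD oppr_eq0.
Qed.

Lemma step_triple (k l : 'I_n) (s t : Zq) (b v : 'rV[Zq]_n) :
  pm1 s -> pm1 t -> unit_step b -> unit_step v ->
  s *: e k + t *: e l != 0 -> t *: e l + b != 0 -> s *: e k + t *: e l + b = v ->
  b = (-1) ^+ (l != k) *: (s *: e k).
Proof.
move=> ps pt [m [u pu ->]] [p [w pw ->]] nz_st nz_tu E.
have Ej j : s *+ (j == k) + t *+ (j == l) + u *+ (j == m) = w *+ (j == p).
  by have := congr1 (fun x : 'rV[Zq]_n => x 0 j) E; rewrite !mxE eqxx !mulr_natr.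
have at_p j x : x != 0 -> x = w *+ (j == p) -> j = p.
  by move=> nz_x; case: eqP => // _ x0; move: nz_x; rewrite x0 eqxx.
have s0 := pm1_neq0 ps; have t0 := pm1_neq0 pt; have u0 := pm1_neq0 pu.
have [lk|lk] := eqVneq l k.
  subst l; have ts : t = s.
    apply: pm1_addr_neq0 => //; apply: contraNneq nz_st => st0.
    by rewrite -scalerDl st0 scale0r.
  subst t; rewrite scale1r; have [mk|mk] := eqVneq m k.
    subst m; rewrite (@pm1_addr_neq0 _ s u) //.
    by apply: contraNneq nz_tu => su0; rewrite -scalerDl su0 scale0r.
  have := Ej k; rewrite eqxx eq_sym (negbTE mk) addr0.
  move=> /(at_p _ _ (pm1_double_neq0 ps)) kp; subst p.
  have := Ej m; rewrite eqxx (negbTE mk) !add0r mulr1n mulr0n => u_eq0.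
  by rewrite u_eq0 eqxx in u0.
rewrite expr1 scaleN1r; have [mk|mk] := eqVneq m k.
  subst m; have := Ej l; rewrite eqxx (negbTE lk) add0r addr0 => /(at_p _ _ t0) lp.
  subst p; have := Ej k; rewrite eqxx eq_sym (negbTE lk) addr0 !mulr1n mulr0n.
  by move/eqP; rewrite addr_eq0 => /eqP ->; rewrite scaleNr opprK.
have := Ej k; rewrite eqxx eq_sym (negbTE lk) eq_sym (negbTE mk) !addr0.
move=> /(at_p _ _ s0) kp; subst p.
have := Ej l; rewrite eqxx (negbTE lk) add0r mulr0n.
have [lm tu0|_] := eqVneq l m.
  by subst m; move: nz_tu; rewrite -scalerDl tu0 scale0r eqxx.
by rewrite addr0 mulr1n => t_eq0; rewrite t_eq0 eqxx in t0.
Qed.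

Hypothesis r_even : ~~ odd r.

Definition off_parity (k : 'I_n) (w : 'rV[Zq]_n) : bool :=
  odd (\sum_(j < n | j != k) val (w ord0 j)).

Lemma off_parityD k (x y : 'rV[Zq]_n) :
  off_parity k (x + y) = off_parity k x (+) off_parity k y.
Proof.
have xor_sum w : off_parity k w = \big[addb/false]_(j < n | j != k) odd (val (w ord0 j)).
  exact: (big_morph odd oddD).
rewrite !xor_sum -big_split; apply: eq_bigr => j _.
by rewrite mxE /= odd_mod ?oddD //= negbK (negbTE r_even).
Qed.

Lemma pm1_odd_val (x : Zq) : pm1 x -> odd (val x).
Proof. by case/orP=> /eqP->; rewrite //= modn_small //= r_even. Qed.

Lemma off_parity0 k : off_parity k 0 = false.
Proof. by have := off_parityD k 0 0; rewrite addr0 addbb. Qed.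

Lemma off_parity_step k l (t : Zq) : pm1 t -> off_parity k (t *: e l) = (l != k).
Proof.
move=> pt; rewrite /off_parity; have [lk|lk] := eqVneq l k.
  by subst l; rewrite big1 // => j jk; rewrite scale_delta_rowE (negbTE jk).
rewrite (bigD1 l) //= big1 => [|j /andP[_ jl]]; last by rewrite scale_delta_rowE (negbTE jl).
by rewrite scale_delta_rowE eqxx addn0 pm1_odd_val.
Qed.

Lemma off_parity_const1 k : off_parity k (const_mx 1 : 'rV[Zq]_n) = odd n.-1.
Proof.
rewrite /off_parity (eq_bigr (fun=> 1%N)) => [|j _]; last by rewrite mxE /= modn_small.
by rewrite sum1_card cardC1 card_ord.
Qed.

End UnitSteps.

Section ShiftSign.
Variables (N : nat) (T : zmodType) (G : 'Z_N -> T) (a : 'Z_N) (c : T) (eps : 'Z_N -> 'Z_N).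
Hypotheses (N_gt2 : (2 < N)%N) (N_even : ~~ odd N) (G_inj : injective G).
Hypotheses (eps_pm1 : forall i, pm1 (eps i)) (G_shift : forall i, G (i + a + eps i) = G i + c).

Lemma eps_add2 i : eps (i + 2%:R) = eps i.
Proof.
have two_neq0 : (2%:R : 'Z_N) != 0 by apply: Zp_nat_neq0; lia.
have up j : eps j = 1 -> eps (j + 2%:R) = 1.
  move=> e1; case/orP: (eps_pm1 (j + 2%:R)) => /eqP // e2.
  have := G_shift (j + 2%:R); rewrite e2 (_ : j + 2%:R + a + -1 = j + a + eps j).
    rewrite G_shift => /addIr/G_inj/(congr1 (fun x => x - j)).
    by rewrite addrAC !subrr add0r => /esym/eqP; rewrite (negbTE two_neq0).
  by rewrite e1; ring.
have up_n m j : eps j = 1 -> eps (j + (2 * m)%:R) = 1.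
  elim: m => [|m IH] e1; first by rewrite addr0.
  by rewrite mulnS natrD addrCA addrC; apply: (up _ (IH e1)).
have [h Nh] : exists h, N = (2 * h)%N.
  by exists N./2; rewrite mul2n -[LHS]odd_double_half (negbTE N_even).
have down j : eps (j + 2%:R) = 1 -> eps j = 1.
  move/(up_n h.-1); rewrite -addrA -natrD (_ : (2 + 2 * h.-1 = N)%N); last by lia.
  by rewrite pchar_Zp ?addr0 //; lia.
have eq_m1 j : eps j != 1 -> eps j = -1.
  by move=> /negbTE ne1; have := eps_pm1 j; rewrite /pm1 ne1 => /eqP.
have [e1|ne1] := eqVneq (eps i) 1; first by rewrite e1 up.
have [e2|ne2] := eqVneq (eps (i + 2%:R)) 1; first by rewrite (down _ e2) eqxx in ne1.
by rewrite (eq_m1 _ ne1) (eq_m1 _ ne2).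
Qed.

Lemma eps_add2n m i : eps (i + (2 * m)%:R) = eps i.
Proof.
elim: m => [|m IH]; first by rewrite addr0.
by rewrite mulnS natrD addrCA addrC eps_add2.
Qed.

Lemma eps_nat k : eps k%:R = eps (odd k)%:R.
Proof. by rewrite -{1}(odd_double_half k) -mul2n natrD eps_add2n. Qed.

Lemma eps_const : eps 1 = eps 0 -> forall i, eps i = eps 0.
Proof. by move=> e10 i; rewrite -(natr_Zp i) eps_nat; case: odd; rewrite ?mulr1n ?mulr0n. Qed.

Lemma eps_alt : eps 1 != eps 0 -> forall i, eps (i + 1) = - eps i.
Proof.
move=> e10 i; rewrite -(natr_Zp i) natr1 (eps_nat (val i).+1) (eps_nat (val i)) /=.
have e01 : eps 1 = - eps 0 by apply: pm1_neq (eps_pm1 0) (eps_pm1 1) _; rewrite eq_sym.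
by case: odd; rewrite /= ?mulr1n ?mulr0n e01 ?opprK.
Qed.

Lemma shift_const : eps 1 = eps 0 -> forall k, G ((a + eps 0) *+ k) = G 0 + c *+ k.
Proof.
move=> e10; elim=> [|k IH]; first by rewrite !mulr0n addr0.
by rewrite !mulrSr addrA -{2}(eps_const e10 ((a + eps 0) *+ k)) G_shift IH addrA.
Qed.

End ShiftSign.

Section NoShiftGrayCode.
Variables r n : nat.
Hypotheses (r_gt0 : (0 < r)%N) (r_even : ~~ odd r) (n_odd : odd n) (n_gt1 : (1 < n)%N).
Local Notation q := r.+2.
Local Notation N := (q ^ n)%N.
Local Notation M := (q ^ n.-1)%N.
Local Notation e k := (delta_mx 0 k : 'rV['Z_q]_n).
Variables (G : 'Z_N -> 'rV['Z_q]_n) (eps : 'Z_N -> 'Z_N).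
Hypotheses (G_inj : injective G) (G_lee : forall i, lee_dist (G i) (G (i + 1)) = 1%N).
Hypotheses (eps_pm1 : forall i, pm1 (eps i)).
Hypothesis G_shift : forall i, G (i + M%:R + eps i) = G i + const_mx 1.
Let D i := G (i + 1) - G i.

Let N_eq : N = (q * M)%N.
Proof. by rewrite -expnS prednK //; lia. Qed.

Let M_even : ~~ odd M.
Proof. rewrite oddX negb_or /= negbK r_even andbT; lia. Qed.

Let N_even : ~~ odd N.
Proof. by rewrite N_eq oddM negb_and /= negbK r_even. Qed.

Let N_gt2 : (2 < N)%N.
Proof. by rewrite N_eq -[M]prednK ?expn_gt0 // mulnS; lia. Qed.

Lemma eps_nonconst : eps 1 != eps 0.
Proof.
apply/eqP => e10; have := shift_const N_gt2 N_even G_inj eps_pm1 G_shift e10 q.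
have -> : const_mx (1 : 'Z_q) *+ q = 0 :> 'rV_n.
  by apply/matrixP => i j; rewrite mulmxnE !mxE pchar_Zp.
rewrite addr0 mulrnDl -mulrnA mulnC -N_eq pchar_Zp ?add0r; last exact: ltnW N_gt2.
have q_neq0 : (q%:R : 'Z_N) != 0 by apply: Zp_nat_neq0; rewrite N_eq; nia.
move/G_inj; case/orP: (eps_pm1 0) => /eqP ->; rewrite ?mulNrn => /eqP.
  by rewrite (negbTE q_neq0).
by rewrite oppr_eq0 (negbTE q_neq0).
Qed.
Let eps_next := eps_alt N_gt2 N_even G_inj eps_pm1 G_shift eps_nonconst.
Let eps_even := eps_add2n N_gt2 N_even G_inj eps_pm1 G_shift.

Lemma D_step i : unit_step (D i).
Proof. exact: lee_dist_eq1. Qed.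

Lemma D_pair_neq0 j : D j + D (j + 1) != 0.
Proof.
have two_neq0 : (1 + 1 : 'Z_N) != 0 by apply: (@Zp_nat_neq0 _ 2); rewrite N_gt2.
rewrite /D subr_telescope subr_eq0; apply: contra_neq two_neq0.
by move/G_inj; rewrite -addrA -[RHS]addr0 => /addrI.
Qed.

Lemma G_shift_up j : eps j = 1 -> G (j + M%:R + 1) = G j + const_mx 1.
Proof. by move=> ej; rewrite -G_shift ej. Qed.

Lemma G_shift_down j : eps j = -1 -> G (j + M%:R - 1) = G j + const_mx 1.
Proof. by move=> ej; rewrite -G_shift ej. Qed.

Lemma D_flip j : eps j = 1 -> D (j + M%:R) = - D j.
Proof.
move=> e1; have e2 : eps (j + 1) = -1 by rewrite eps_next e1.
rewrite /D (G_shift_up e1) (_ : j + M%:R = j + 1 + M%:R - 1); last by ring.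
by rewrite (G_shift_down e2) opprD addrACA subrr addr0 opprB.
Qed.

Lemma D_triple j : eps j = 1 -> D (j + 1 + M%:R) = D j + D (j + 1) + D (j + 1 + 1).
Proof.
move=> e1; have e4 : eps (j + 1 + 1 + 1) = -1 by rewrite !eps_next e1 opprK.
rewrite /D !subr_telescope (_ : j + 1 + M%:R + 1 = j + 1 + 1 + 1 + M%:R - 1); last by ring.
rewrite (_ : j + 1 + M%:R = j + M%:R + 1); last by ring.
by rewrite (G_shift_down e4) (G_shift_up e1) opprD addrACA subrr addr0.
Qed.

Lemma D_two_steps j k s : eps j = 1 -> pm1 s -> D j = s *: e k ->
  D (j + 1 + 1) = (-1) ^+ off_parity k (D (j + 1)) *: D j.
Proof.
move=> e1 ps Dj; have [l [t pt Dl]] := D_step (j + 1).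
rewrite Dl (off_parity_step r_even _ _ pt) Dj.
apply: (step_triple r_gt0 ps pt (D_step _) (D_step (j + 1 + M%:R))).
- by rewrite -Dj -Dl D_pair_neq0.
- by rewrite -Dl D_pair_neq0.
- by rewrite -Dj -Dl D_triple.
Qed.

Lemma D_sign_even i0 k s m : eps i0 = 1 -> pm1 s -> D i0 = s *: e k ->
  D (i0 + (2 * m)%:R) = (-1) ^+ off_parity k (G (i0 + (2 * m)%:R) - G i0) *: D i0.
Proof.
move=> e0 ps D0; elim: m => [|m IH].
  by rewrite muln0 addr0 subrr (off_parity0 r_even) scale1r.
set j := i0 + (2 * m)%:R in IH *; set p := off_parity k (G j - G i0) in IH.
have ej : eps j = 1 by rewrite eps_even.
have -> : i0 + (2 * m.+1)%:R = j + 1 + 1 by rewrite /j mulnS natrD; ring.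
have Dj : D j = ((-1) ^+ p * s) *: e k by rewrite IH D0 scalerA.
rewrite (D_two_steps ej (pm1_sign p ps) Dj) IH scalerA -signr_addb.
have -> : G (j + 1 + 1) - G i0 = (G j - G i0) + D j + D (j + 1) by rewrite /D !subr_telescope.
rewrite [in RHS](off_parityD r_even) [in RHS](off_parityD r_even) -/p Dj.
by rewrite (off_parity_step r_even _ _ (pm1_sign p ps)) eqxx addbF addbC.
Qed.

Lemma no_shift_gray_code : False.
Proof.
have [i0 e0] : exists i0, eps i0 = 1.
  case/orP: (eps_pm1 0) => /eqP e0; first by exists 0.
  by exists 1; have := eps_next 0; rewrite add0r e0 opprK.
have [k [s ps D0]] := D_step i0.
have M_half : M = (2 * M./2)%N by rewrite mul2n -[LHS]odd_double_half (negbTE M_even).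
have := D_sign_even M./2 e0 ps D0; rewrite -M_half D_flip //.
have -> : G (i0 + M%:R) - G i0 = D i0 + const_mx 1.
  have e1 : eps (i0 + 1) = -1 by rewrite eps_next e0.
  rewrite (_ : i0 + M%:R = i0 + 1 + M%:R - 1); last by ring.
  by rewrite (G_shift_down e1) /D addrAC.
have n1_even : ~~ odd n.-1 by move: n_odd; rewrite -{1}(prednK (ltnW n_gt1)).
rewrite (off_parityD r_even) D0 (off_parity_step r_even _ _ ps) eqxx.
rewrite off_parity_const1 (negbTE n1_even).
rewrite expr0 scale1r -scaleNr => /(congr1 (fun w : 'rV_n => w 0 k)).
rewrite !scale_delta_rowE eqxx => /eqP; rewrite eq_sym -addr_eq0.
by rewrite (negbTE (pm1_double_neq0 r_gt0 ps)).
Qed.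

End NoShiftGrayCode.

Theorem theorem4 (q n : nat) :
  (4 <= q)%N -> ~~ odd q -> (3 <= n)%N -> odd n ->
  ~ exists G : 'Z_(q ^ n) -> 'rV['Z_q]_n,
      [/\ bijective G,
          (forall i : 'Z_(q ^ n), lee_dist (G i) (G (i + 1)) = 1%N) &
          (forall i : 'Z_(q ^ n), exists2 e : 'Z_(q ^ n),
              (e == 1) || (e == -1) &
              G i + const_mx 1 = G (i + (q ^ n.-1)%:R + e))].
Proof.
move=> q_ge4 q_even n_ge3 n_odd [G [G_bij G_lee G_shift]].
have [r q_eq] : exists r, q = r.+2 by exists q.-2; lia.
subst q; have [Ginv GK GinvK] := G_bij.
pose eps i := Ginv (G i + const_mx 1) - (i + (r.+2 ^ n.-1)%:R).
apply: (@no_shift_gray_code r n _ _ n_odd _ G eps (bij_inj G_bij) G_lee) => [||| i | i].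
- by lia.
- by rewrite /= !negbK in q_even.
- by lia.
- by rewrite /eps; have [e pm1_e ->] := G_shift i; rewrite GK addrC addKr.
- by rewrite /eps addrC subrK GinvK.
Qed.
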